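(* Let $\ell\ge1$ be an integer and $p\in(0,1)$. Consider the random walk $(X_t)_{t\ge0}$ on $\mathbb{Z}_2^\ell$ with $X_0$ uniformly distributed on $\mathbb{Z}_2^\ell$, and let $T=\min\{t\ge 0: X_t=\mathbf{1}^\ell\}$, where $\mathbf{1}^\ell$ is the all-ones string. Then \[ \mathbb{E}[T]=\sum_{j=1}^{\ell}\binom{\ell}{j}\frac{1}{1-(1-2p)^j}. \]
   Context: $\mathbb{Z}_2^\ell$ is the group of bit strings of length $\ell$ with coordinatewise addition modulo 2. The random walk is defined by $X_{t+1}=X_t+W_{t+1}$, where $W_1,W_2,\dots$ are i.i.d., independent of $X_0$, and each $W_t$ has law $\mu(w)=p^{\|w\|}(1-p)^{\ell-\|w\|}$ with $\|w\|$ the number of ones in $w$; equivalently, at each step every bit of the current string is flipped independently with probability $p$. *)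

From HB Require Import structures.
From mathcomp Require Import all_boot all_order all_algebra.
From mathcomp Require Import all_classical all_reals all_analysis.
Set Implicit Arguments. Unset Strict Implicit. Unset Printing Implicit Defensive.
Import Order.TTheory GRing.Theory Num.Theory.
Local Open Scope ring_scope.

Definition bits (l : nat) := {ffun 'I_l -> bool}.

Definition badd (l : nat) (x y : bits l) : bits l := [ffun i => x i (+) y i].

Definition ones (l : nat) : bits l := [ffun => true].

Definition hweight (l : nat) (w : bits l) : nat := #|[set i | w i]|.

Definition mu (R : comNzRingType) (l : nat) (p : R) (w : bits l) : R :=
  p ^+ hweight w * (1 - p) ^+ (l - hweight w).

Definition walkpos (l t : nat) (x0 : bits l) (ws : t.-tuple (bits l)) (k : nat)
  : bits l := foldl (@badd l) x0 (take k ws).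

(* P(T > t) = P(X_0 <> 1^l, ..., X_t <> 1^l), with X_0 uniform on Z_2^l and
   W_1, ..., W_t i.i.d. with law mu, independent of X_0 (the joint law of
   (X_0, W_1, ..., W_t) is the product measure). *)
Definition prob_T_gt (R : fieldType) (l : nat) (p : R) (t : nat) : R :=
  \sum_(x0 : bits l) \sum_(ws : t.-tuple (bits l))
    ((2 ^+ l)^-1 * \prod_(w <- ws) mu p w) *
      (if [forall k : 'I_t.+1, walkpos x0 ws k != ones l] then 1 else 0).

From HB Require Import structures.
From mathcomp Require Import all_boot all_order all_algebra.
From mathcomp Require Import all_classical all_reals all_analysis.
From mathcomp Require Import ring lra.
Import Order.TTheory GRing.Theory Num.Theory numFieldNormedType.Exports.
Local Open Scope classical_set_scope.
Local Open Scope ring_scope.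
Set Implicit Arguments. Unset Strict Implicit.

(* Write lam = 1 - 2p. The characters bchar S of Z_2^l are eigenfunctions of
   the step operator, with eigenvalue lam^|S|. Hence the Fourier series
     h x = sum_(S <> 0) (1 - bchar S (x + 1^l)) / (1 - lam^|S|)
   vanishes at 1^l and satisfies h x = 1 + E h (x + W) everywhere else. The
   excess r_t x = h x - sum_(s < t) P_x(T > s) then obeys the recursion of the
   walk killed at 1^l; as every step hits 1^l with probability at least
   (p (1 - p))^l, r_t decays geometrically. So sum_t P(T > t) converges to the
   average of h, which orthogonality of characters evaluates to
   sum_j 'C(l, j) / (1 - lam^j). *)

Lemma forall_ordS n (P : nat -> bool) :
  [forall k : 'I_n.+1, P k] = P 0%N && [forall k : 'I_n, P k.+1].
Proof.
apply/forallP/andP => [P_all | [P0 /forallP P_succ] [[|k] k_lt]] //.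
  by split; [exact: (P_all ord0) | apply/forallP => k; exact: (P_all (lift ord0 k))].
exact: (P_succ (Ordinal (k_lt : (k < n)%N))).
Qed.

Lemma sum_tupleS (R : nmodType) (T : finType) n (F : n.+1.-tuple T -> R) :
  \sum_(ws : n.+1.-tuple T) F ws =
  \sum_(w : T) \sum_(ws : n.-tuple T) F [tuple of w :: ws].
Proof.
rewrite pair_bigA /= (reindex (fun wws : T * n.-tuple T => [tuple of wws.1 :: wws.2])) //=.
exists (fun ws : n.+1.-tuple T => (thead ws, [tuple of behead ws])) => [[w ws] _ | ws _].
  by congr (_, _); apply: val_inj.
by case/tupleP: ws => w ws; apply: val_inj.
Qed.

Lemma cvg_geometric_error (R : archiRealFieldType) (u : nat -> R) (L C q : R) :
  `|q| < 1 -> (forall n, `|L - u n| <= C * q ^+ n) -> u @ \oo --> L.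
Proof.
move=> q_lt1 u_close.
have err0 : (C * q ^+ n) @[n --> \oo] --> 0.
  by rewrite -(mulr0 C); apply: cvgM; [exact: cvg_cst | exact: cvg_expr].
apply: (squeeze_cvgr (f := fun n => L - C * q ^+ n) (h := fun n => L + C * q ^+ n)).
- apply: nearW => n; move: (u_close n); rewrite ler_norml => /andP [? ?].
  by apply/andP; split; lra.
- by rewrite -[X in _ --> X]subr0; apply: cvgB => //; exact: cvg_cst.
- by rewrite -[X in _ --> X]addr0; apply: cvgD => //; exact: cvg_cst.
Qed.

Section BitStrings.
Variable l : nat.

Definition bits0 : bits l := [ffun => false].

Lemma baddAC : right_commutative (@badd l).
Proof. by move=> x y z; apply/ffunP => i; rewrite !ffunE addbAC. Qed.

Lemma baddK (x : bits l) : involutive (badd x).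
Proof. by move=> y; apply/ffunP => i; rewrite !ffunE addKb. Qed.

Lemma badd_eq0 (x y : bits l) : (badd x y == bits0) = (x == y).
Proof.
apply/eqP/eqP => [/ffunP xy0 | <-]; last by apply/ffunP => i; rewrite !ffunE addbb.
by apply/ffunP => i; move: (xy0 i); rewrite !ffunE; case: (x i) (y i) => [] [].
Qed.

Lemma baddxx (x : bits l) : badd x x = bits0.
Proof. by apply/eqP; rewrite badd_eq0. Qed.

Lemma hweight_eq0 (S : bits l) : (hweight S == 0%N) = (S == bits0).
Proof.
rewrite /hweight cards_eq0; apply/eqP/eqP => [S0 | ->].
  apply/ffunP => i; rewrite ffunE; apply/negbTE/negP => Si.
  by have := finset.in_set0 i; rewrite -S0 inE Si.
by apply/finset.setP => i; rewrite !inE ffunE.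
Qed.

Lemma hweight_bits0 : hweight bits0 = 0%N.
Proof. by apply/eqP; rewrite hweight_eq0. Qed.

Lemma hweight_le (S : bits l) : (hweight S <= l)%N.
Proof. by rewrite /hweight -[X in (_ <= X)%N]card_ord max_card. Qed.

Lemma card_bits : #|{: bits l}| = (2 ^ l)%N.
Proof. by rewrite card_ffun card_bool card_ord. Qed.

Lemma sum_bits_prod (R : comPzSemiRingType) (F : 'I_l -> bool -> R) :
  \sum_(y : bits l) \prod_i F i (y i) = \prod_i (F i true + F i false).
Proof.
rewrite (eq_bigr (fun i => \sum_b F i b)) => [|i _]; last by rewrite big_bool.
by rewrite bigA_distr_bigA.
Qed.

Lemma sum_bits_hweight (R : pzSemiRingType) (F : nat -> R) :
  \sum_(S : bits l) F (hweight S) = \sum_(j < l.+1) 'C(l, j)%:R * F j.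
Proof.
pose set_of (A : {set 'I_l}) : bits l := [ffun i => i \in A].
rewrite (reindex set_of) /=; last first.
  exists (fun S : bits l => [set i | S i]%SET) => [A _ | S _].
    by apply/finset.setP => i; rewrite inE ffunE.
  by apply/ffunP => i; rewrite !ffunE inE.
have hweight_set_of A : hweight (set_of A) = #|A|.
  by apply: eq_card => i; rewrite !inE ffunE.
under eq_bigr do rewrite hweight_set_of.
rewrite (partition_big (fun A : {set 'I_l} => inord #|A| : 'I_l.+1) xpredT) //=.
apply: eq_bigr => j _.
rewrite (eq_bigl (fun A : {set 'I_l} => #|A| == j)) => [|A]; last first.
  have A_le : (#|A| < l.+1)%N by rewrite ltnS -[X in (_ <= X)%N](card_ord l) max_card.
  by apply/eqP/eqP => [<- | jA]; [rewrite inordK | apply/val_inj; rewrite /= inordK].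
rewrite (eq_bigr (fun _ => F j)) => [|A /eqP -> //].
by rewrite sumr_const -cardsE card_draws card_ord mulr_natl.
Qed.

End BitStrings.

Section Characters.
Variables (R : comNzRingType) (l : nat).

Definition bchar (S y : bits l) : R := \prod_i (if S i && y i then -1 else 1).

Lemma bcharC S y : bchar S y = bchar y S.
Proof. by apply: eq_bigr => i _; rewrite andbC. Qed.

Lemma bchar0 S : bchar S (bits0 l) = 1.
Proof. by rewrite /bchar big1 // => i _; rewrite ffunE andbF. Qed.

Lemma bcharD S x y : bchar S (badd x y) = bchar S x * bchar S y.
Proof.
rewrite /bchar -big_split; apply: eq_bigr => i _ /=; rewrite ffunE.
by case: (S i) (x i) (y i) => [] [] [] /=; rewrite ?mulrNN ?mulr1 ?mul1r.
Qed.

Lemma sum_bchar S : \sum_y bchar S y = if S == bits0 l then 2 ^+ l else 0.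
Proof.
rewrite (sum_bits_prod (fun i b => if S i && b then -1 else 1)).
case: eqP => [-> | /eqP S_neq0].
  by rewrite (eq_bigr (fun _ => 2)) ?prodr_const ?card_ord // => i _; rewrite ffunE.
have [i Si] : exists i, S i.
  apply/existsP; apply: contraNT S_neq0; rewrite negb_exists => /forallP S0.
  by apply/eqP/ffunP => i; rewrite ffunE; apply/negbTE.
by rewrite (bigD1 i) //= Si addNr mul0r.
Qed.

Variable p : R.
Local Notation lam := (1 - 2 * p).

Lemma mu_prod (w : bits l) : mu p w = \prod_i (if w i then p else 1 - p).
Proof.
rewrite (bigID (fun i => w i)) /=.
rewrite (eq_bigr (fun _ => p)) => [|i -> //].
rewrite [X in _ * X](eq_bigr (fun _ => 1 - p)) => [|i /negbTE -> //].
rewrite !prodr_const /mu /hweight cardsE; congr (_ * _ ^+ _).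
by rewrite -{1}(card_ord l) -(cardC w) addKn; apply: eq_card.
Qed.

Lemma mu_bchar S : \sum_w mu p w * bchar S w = lam ^+ hweight S.
Proof.
under eq_bigr do rewrite mu_prod /bchar -big_split /=.
rewrite (sum_bits_prod (fun i b => (if b then p else 1 - p) * (if S i && b then -1 else 1))).
rewrite /hweight -prodr_const [RHS]big_mkcond /=.
by apply: eq_bigr => i _; rewrite inE; case: (S i) => /=; ring.
Qed.

Lemma sum_mu : \sum_(w : bits l) mu p w = 1.
Proof.
have := mu_bchar (bits0 l); rewrite hweight_bits0 expr0 => <-.
by apply: eq_bigr => w _; rewrite bcharC bchar0 mulr1.
Qed.

Lemma mu_bchar_shift S x :
  \sum_w mu p w * bchar S (badd x w) = lam ^+ hweight S * bchar S x.
Proof.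
under eq_bigr do rewrite bcharD mulrCA.
by rewrite -mulr_sumr mu_bchar mulrC.
Qed.

End Characters.

Section HittingTime.
Variables (R : realFieldType) (l : nat) (p : R).
Hypotheses (p_gt0 : 0 < p) (p_lt1 : p < 1).
Local Notation lam := (1 - 2 * p).

Lemma expr_lam_eq1 j : (lam ^+ j == 1) = (j == 0%N).
Proof.
case: j => [|j]; first by rewrite expr0 !eqxx.
apply/negbTE/eqP => lamX1.
have lam_lt1 : `|lam| < 1.
  move: p_gt0 p_lt1 => ? ?; rewrite ltr_norml; apply/andP; split; lra.
have := exprn_ilt1 j.+1 (normr_ge0 _) lam_lt1.
by rewrite -normrX lamX1 normr1 ltxx.
Qed.

(* The [S = bits0] term is [0 / 0 = 0]. *)
Definition hit_time (x : bits l) : R :=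
  \sum_S (1 - bchar R S (badd x (ones l))) / (1 - lam ^+ hweight S).

Lemma hit_time_ones : hit_time (ones l) = 0.
Proof. by rewrite /hit_time big1 // => S _; rewrite baddxx bchar0 subrr mul0r. Qed.

Lemma hit_time_step x :
  x != ones l -> hit_time x = 1 + \sum_w mu p w * hit_time (badd x w).
Proof.
move=> x_neq1; set y := badd x (ones l).
pose d (S : bits l) := 1 - lam ^+ hweight S.
have y_neq0 : y != bits0 l by rewrite badd_eq0.
have -> : \sum_w mu p w * hit_time (badd x w) =
          \sum_S (1 - lam ^+ hweight S * bchar R S y) / d S.
  rewrite /hit_time; under eq_bigr do rewrite mulr_sumr.
  rewrite exchange_big; apply: eq_bigr => S _ /=.
  under eq_bigr do rewrite baddAC mulrA.
  rewrite -mulr_suml; congr (_ / _).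
  under eq_bigr do rewrite mulrBr mulr1.
  by rewrite sumrB sum_mu mu_bchar_shift.
have term S : (1 - bchar R S y) / d S - (1 - lam ^+ hweight S * bchar R S y) / d S
              = (if S == bits0 l then 1 else 0) - bchar R S y.
  have [-> | S_neq0] := eqVneq S (bits0 l).
    by rewrite /d hweight_bits0 bcharC bchar0 expr0 !subrr invr0 !mulr0 subrr.
  have d_neq0 : d S != 0 by rewrite subr_eq0 eq_sym expr_lam_eq1 hweight_eq0.
  by move: d_neq0; rewrite /d => ?; field.
apply/eqP; rewrite -subr_eq -sumrB (eq_bigr _ (fun S _ => term S)) sumrB.
under [X in _ - X]eq_bigr do rewrite bcharC.
by rewrite sum_bchar (negbTE y_neq0) subr0 -big_mkcond big_pred1_eq.
Qed.

Lemma mean_hit_time : (2 ^+ l)^-1 * \sum_x hit_time x =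
  \sum_(1 <= j < l.+1) 'C(l, j)%:R / (1 - lam ^+ j).
Proof.
have sum_shift S : \sum_(x : bits l) bchar R S (badd x (ones l)) = \sum_x bchar R S x.
  under eq_bigr do rewrite bcharD.
  rewrite -mulr_suml sum_bchar; case: eqP => [->|_]; last by rewrite mul0r.
  by rewrite bcharC bchar0 mulr1.
have term S : (2 ^+ l)^-1 * \sum_x (1 - bchar R S (badd x (ones l))) /
    (1 - lam ^+ hweight S) = (1 - lam ^+ hweight S)^-1.
  rewrite -mulr_suml sumrB sum_shift sum_bchar sumr_const card_bits natrX.
  case: eqP => [->|_]; first by rewrite hweight_bits0 expr0 !subrr invr0 !mulr0.
  have two_neq0 : (2 ^+ l : R) != 0 by rewrite expf_neq0 // pnatr_eq0.
  by rewrite subr0 mulrA mulVf // mul1r.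
rewrite /hit_time exchange_big /= mulr_sumr (eq_bigr _ (fun S _ => term S)).
rewrite (sum_bits_hweight l (fun j => (1 - lam ^+ j)^-1)).
rewrite -(big_mkord xpredT (fun j => 'C(l, j)%:R * (1 - lam ^+ j)^-1)).
by rewrite big_ltn // expr0 subrr invr0 mulr0 add0r.
Qed.

Lemma mu_ge (w : bits l) : (p * (1 - p)) ^+ l <= mu p w.
Proof.
have p_ge0 : 0 <= p by exact: ltW.
have subp_ge0 : 0 <= 1 - p by rewrite subr_ge0 ltW.
have subp_le1 : 1 - p <= 1 by rewrite lerBlDr lerDl.
rewrite exprMn /mu; apply: ler_pM; rewrite ?exprn_ge0 //.
  by apply: ler_wiXn2l; rewrite ?ltW ?hweight_le.
by apply: ler_wiXn2l; rewrite ?leq_subr.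
Qed.

Lemma killed_step_le (f : bits l -> R) (M : R) x :
  (forall y, `|f y| <= M) -> f (ones l) = 0 ->
  `|\sum_w mu p w * f (badd x w)| <= (1 - (p * (1 - p)) ^+ l) * M.
Proof.
move=> f_le f1; set w1 := badd x (ones l).
have c_ge0 : 0 <= (p * (1 - p)) ^+ l by rewrite exprn_ge0 // mulr_ge0 ?subr_ge0 ?ltW.
have mu_ge0 w : 0 <= mu p w := le_trans c_ge0 (mu_ge w).
rewrite (bigD1 w1) //= /w1 baddK f1 mulr0 add0r.
apply: le_trans (ler_norm_sum _ _ _) _.
apply: le_trans (_ : \sum_(w | w != w1) mu p w * M <= _).
  apply: ler_sum => w _; rewrite normrM ger0_norm //.
  exact: ler_wpM2l.
have M_ge0 : 0 <= M := le_trans (normr_ge0 _) (f_le x).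
rewrite -mulr_suml; apply: ler_wpM2r => //.
have := sum_mu l p; rewrite (bigD1 w1) //= => sum1.
by have := mu_ge w1; rewrite -sum1 => ?; lra.
Qed.

Lemma killed_rate_ge0_lt1 : 0 <= 1 - (p * (1 - p)) ^+ l < 1.
Proof.
have pq_gt0 : 0 < p * (1 - p) by rewrite mulr_gt0 // subr_gt0.
have pq_le1 : p * (1 - p) <= 1 by move: p_gt0 p_lt1 => ? ?; nra.
have := exprn_gt0 l pq_gt0; have := exprn_ile1 l (ltW pq_gt0) pq_le1.
by move=> ? ?; apply/andP; split; lra.
Qed.

End HittingTime.

Section Survival.
Variables (R : comNzRingType) (l : nat) (p : R).

Definition survival t (x : bits l) : R :=
  \sum_(ws : t.-tuple (bits l)) \prod_(w <- ws) mu p w *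
    (if [forall k : 'I_t.+1, walkpos x ws k != ones l] then 1 else 0).

Lemma survival0 x : survival 0 x = if x == ones l then 0 else 1.
Proof.
rewrite /survival (big_pred1 [tuple]) => [|ws]; last by symmetry; apply/eqP; exact: tuple0.
rewrite big_nil mul1r (forall_ordS 0 (fun k => walkpos x [tuple] k != ones l)).
have -> : [forall k : 'I_0, walkpos x [tuple] k.+1 != ones l] by apply/forallP => -[].
by rewrite andbT /walkpos /=; case: eqP.
Qed.

Lemma survivalS t x : survival t.+1 x =
  if x == ones l then 0 else \sum_w mu p w * survival t (badd x w).
Proof.
rewrite /survival sum_tupleS.
have first_step w (ws : t.-tuple (bits l)) :
    [forall k : 'I_t.+2, walkpos x [tuple of w :: ws] k != ones l] =
    (x != ones l) && [forall k : 'I_t.+1, walkpos (badd x w) ws k != ones l].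
  exact: (forall_ordS t.+1 (fun k => walkpos x [tuple of w :: ws] k != ones l)).
case: eqP => [x1 | /eqP x_neq1].
  by rewrite big1 // => w _; rewrite big1 // => ws _; rewrite first_step x1 eqxx mulr0.
apply: eq_bigr => w _; rewrite mulr_sumr; apply: eq_bigr => ws _.
by rewrite big_cons first_step x_neq1 mulrA.
Qed.

End Survival.

Lemma prob_T_gt_survival (R : fieldType) l (p : R) t :
  prob_T_gt l p t = (2 ^+ l)^-1 * \sum_(x : bits l) survival p t x.
Proof.
rewrite /prob_T_gt mulr_sumr; apply: eq_bigr => x _.
by rewrite /survival mulr_sumr; apply: eq_bigr => ws _; rewrite mulrA.
Qed.

Section Convergence.
Variables (R : realFieldType) (l : nat) (p : R).
Hypotheses (p_gt0 : 0 < p) (p_lt1 : p < 1).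

(* Once [hit_time] is known to be the expected hitting time, this is E_x[(T - t)^+]. *)
Definition hit_time_excess t (x : bits l) : R :=
  hit_time p x - \sum_(0 <= s < t) survival p s x.

Lemma hit_time_excessS t x : hit_time_excess t.+1 x =
  if x == ones l then 0 else \sum_w mu p w * hit_time_excess t (badd x w).
Proof.
rewrite /hit_time_excess big_nat_recl // survival0.
case: eqP => [-> | /eqP x_neq1].
  by rewrite hit_time_ones big1 ?addr0 ?subrr // => s _; rewrite survivalS eqxx.
under eq_bigr do rewrite survivalS (negbTE x_neq1).
rewrite exchange_big /= (hit_time_step p_gt0 p_lt1 x_neq1) opprD addrACA subrr add0r.
by rewrite -sumrB; apply: eq_bigr => w _; rewrite mulrBr -mulr_sumr.
Qed.

Lemma hit_time_excess_ones t : hit_time_excess t (ones l) = 0.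
Proof.
case: t => [|t]; last by rewrite hit_time_excessS eqxx.
by rewrite /hit_time_excess big_geq // hit_time_ones subrr.
Qed.

Lemma hit_time_excess_le t x : `|hit_time_excess t x| <=
  (\sum_(y : bits l) `|hit_time p y|) * (1 - (p * (1 - p)) ^+ l) ^+ t.
Proof.
elim: t x => [|t IH] x.
  rewrite /hit_time_excess big_geq // subr0 expr0 mulr1 (bigD1 x) //= lerDl.
  by apply: sumr_ge0 => y _; exact: normr_ge0.
rewrite hit_time_excessS; case: eqP => [_ | _].
  have /andP [q_ge0 _] := killed_rate_ge0_lt1 l p_gt0 p_lt1.
  by rewrite normr0 mulr_ge0 ?exprn_ge0 ?sumr_ge0.
by rewrite exprS mulrCA; apply: killed_step_le => //; exact: hit_time_excess_ones.
Qed.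

Lemma partial_sum_prob_T_gt n : \sum_(0 <= t < n) prob_T_gt l p t =
  (2 ^+ l)^-1 * \sum_(x : bits l) hit_time p x -
  (2 ^+ l)^-1 * \sum_(x : bits l) hit_time_excess n x.
Proof.
under eq_bigr do rewrite prob_T_gt_survival.
rewrite -mulr_sumr -mulrBr exchange_big -sumrB /=; congr (_ * _).
by apply: eq_bigr => x _; rewrite /hit_time_excess opprB addrC subrK.
Qed.

Lemma mean_hit_time_excess_le n :
  `|(2 ^+ l)^-1 * \sum_(x : bits l) hit_time_excess n x| <=
  (\sum_(y : bits l) `|hit_time p y|) * (1 - (p * (1 - p)) ^+ l) ^+ n.
Proof.
have two_gt0 : (0 : R) < 2 ^+ l by rewrite exprn_gt0.
rewrite normrM gtr0_norm ?invr_gt0 // mulrC ler_pdivrMr //.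
apply: le_trans (ler_norm_sum _ _ _) _.
apply: le_trans (_ : \sum_(x : bits l) (\sum_(y : bits l) `|hit_time p y|) *
                       (1 - (p * (1 - p)) ^+ l) ^+ n <= _).
  by apply: ler_sum => x _; exact: hit_time_excess_le.
by rewrite sumr_const card_bits -natrX mulr_natr.
Qed.

End Convergence.

Unset Implicit Arguments.

Theorem mainTheorem2 (R : realType) (l : nat) (p : R) :
  (1 <= l)%N -> 0 < p < 1 ->
  (fun n : nat => (\sum_(0 <= t < n) prob_T_gt l p t)%R) @ \oo -->
    \sum_(1 <= j < l.+1) ('C(l, j)%:R / (1 - (1 - 2 * p) ^+ j)).
Proof.
move=> _ /andP [p_gt0 p_lt1].
have /andP [q_ge0 q_lt1] := killed_rate_ge0_lt1 l p_gt0 p_lt1.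
rewrite -(mean_hit_time l p).
apply: (cvg_geometric_error (C := \sum_(y : bits l) `|hit_time p y|)
                            (q := 1 - (p * (1 - p)) ^+ l)).
  by rewrite ger0_norm.
move=> n; rewrite partial_sum_prob_T_gt opprB addrC subrK.
exact: mean_hit_time_excess_le.
Qed.
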